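(* Let $A,K$ be real $n\times n$ matrices, $\alpha>0$, and $F_{A,K,\alpha}(u)=|Ku|^\alpha Au$ for $u\in\mathbb R^n$. (i) If $K$ is invertible and $F_{A,K,\alpha}$ is monotone, then $u^TAu\ge0$ for all $u\in\mathbb R^n$. (ii) If $F_{A,K,\alpha}$ is $\beta$-monotone for some $\beta>0$, then $A$ and $K$ are invertible, $\beta=\alpha+2$, and there is $C>0$ with $u^TAu\ge C|u|^2$ for all $u\in\mathbb R^n$.
   Context: $|\cdot|$ is the Euclidean norm. A map $F:\mathbb R^n\to\mathbb R^n$ is monotone if $(F(u)-F(v))\cdot(u-v)\ge0$ for all $u,v$; for $\beta>0$ it is $\beta$-monotone if there is $C>0$ with $(F(u)-F(v))\cdot(u-v)\ge C|u-v|^\beta$ for all $u,v$. *)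

From HB Require Import structures.
From mathcomp Require Import all_boot all_order all_algebra.
From mathcomp Require Import all_classical all_reals all_analysis.
Set Implicit Arguments. Unset Strict Implicit. Unset Printing Implicit Defensive.
Import Order.TTheory GRing.Theory Num.Theory.
Local Open Scope ring_scope.

Definition dotv (R : realType) (n : nat) (u v : 'cV[R]_n) : R :=
  \sum_(i < n) u i 0 * v i 0.

Definition enorm (R : realType) (n : nat) (u : 'cV[R]_n) : R :=
  Num.sqrt (dotv u u).

Definition FAK (R : realType) (n : nat) (A K : 'M[R]_n) (alpha : R)
  (u : 'cV[R]_n) : 'cV[R]_n :=
  (enorm (K *m u) `^ alpha) *: (A *m u).

Definition monotone_map (R : realType) (n : nat) (F : 'cV[R]_n -> 'cV[R]_n) : Prop :=
  forall u v : 'cV[R]_n, 0 <= dotv (F u - F v) (u - v).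

Definition beta_monotone (R : realType) (n : nat) (beta : R)
  (F : 'cV[R]_n -> 'cV[R]_n) : Prop :=
  exists C : R, 0 < C /\
    forall u v : 'cV[R]_n, C * (enorm (u - v) `^ beta) <= dotv (F u - F v) (u - v).

From mathcomp Require Import all_boot all_order all_algebra.
From mathcomp Require Import all_classical all_reals all_analysis.
From mathcomp Require Import ring lra.
Set Implicit Arguments. Unset Strict Implicit. Unset Printing Implicit Defensive.
Import Order.TTheory GRing.Theory Num.Theory.
Local Open Scope ring_scope.

(* Monotonicity of F(u) = |Ku|^alpha Au, tested only against v = 0, gives
     C |u|^beta <= |Ku|^alpha u^T A u        (resp. 0 <= ... for (i)).
   (i)  If K is invertible, |Ku|^alpha > 0 for u <> 0, whence u^T A u >= 0.
   (ii) A vector u <> 0 with Ku = 0 or Au = 0 would make the right-hand side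
        vanish, so K and A are invertible.  Along a ray t u the left side scales
        like t^beta and the right side like t^(alpha+2), which forces
        beta = alpha + 2.  Finally the operator bound |Ku| <= L |u| turns the
        inequality into C L^-alpha |u|^2 <= u^T A u. *)

Section EuclideanNorm.
Variables (R : realType) (n : nat).
Implicit Types (u v : 'cV[R]_n) (M : 'M[R]_n).

Lemma dotv_ge0 u : 0 <= dotv u u.
Proof. by apply: sumr_ge0 => i _; rewrite -expr2 sqr_ge0. Qed.

Lemma dotv_eq0 u : dotv u u = 0 -> u = 0.
Proof.
move=> /eqP; rewrite /dotv psumr_eq0 => [/allP u2_eq0|i _]; last first.
  by rewrite -expr2 sqr_ge0.
apply/matrixP => i j; rewrite (ord1 j) mxE.
have /u2_eq0 /implyP /(_ isT) : i \in index_enum 'I_n by rewrite mem_index_enum.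
by rewrite mulf_eq0 orbb => /eqP.
Qed.

Lemma dotvZl c u v : dotv (c *: u) v = c * dotv u v.
Proof. by rewrite /dotv mulr_sumr; apply: eq_bigr => i _; rewrite mxE mulrA. Qed.

Lemma dotvZr c u v : dotv u (c *: v) = c * dotv u v.
Proof. by rewrite /dotv mulr_sumr; apply: eq_bigr => i _; rewrite mxE mulrCA. Qed.

Lemma enorm_ge0 u : 0 <= enorm u.
Proof. exact: sqrtr_ge0. Qed.

Lemma enorm_gt0 u : u != 0 -> 0 < enorm u.
Proof.
move=> u0; rewrite /enorm sqrtr_gt0 lt_def dotv_ge0 andbT.
by apply: contra u0 => /eqP /dotv_eq0 ->.
Qed.

Lemma enorm0 : enorm (0 : 'cV[R]_n) = 0.
Proof. by rewrite /enorm /dotv big1 ?sqrtr0 // => i _; rewrite mxE mul0r. Qed.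

Lemma enormZ t u : 0 <= t -> enorm (t *: u) = t * enorm u.
Proof.
move=> t0; rewrite /enorm dotvZl dotvZr mulrA sqrtrM ?mulr_ge0 //.
by rewrite -expr2 sqrtr_sqr ger0_norm.
Qed.

Lemma qformE M u : (u^T *m M *m u) 0 0 = dotv (M *m u) u.
Proof. by rewrite -mulmxA !mxE /dotv; apply: eq_bigr => i _; rewrite mxE mulrC. Qed.

Lemma coord_le_enorm u i : `|u i 0| <= enorm u.
Proof.
rewrite -sqrtr_sqr /enorm ler_sqrt ?dotv_ge0 // /dotv (bigD1 i) //= expr2 lerDl.
by apply: sumr_ge0 => j _; rewrite -expr2 sqr_ge0.
Qed.

Lemma enorm_le_coord_bound u m :
  (0 < n)%N -> 0 <= m -> (forall i, `|u i 0| <= m) -> enorm u <= n%:R * m.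
Proof.
move=> n0 m0 um.
have n1 : 1 <= n%:R :> R by rewrite ler1n.
have sum_le : dotv u u <= n%:R * m ^+ 2.
  apply: (@le_trans _ _ (\sum_(i < n) m ^+ 2)); last first.
    by rewrite sumr_const card_ord mulr_natl.
  apply: ler_sum => i _.
  by rewrite -expr2 -real_normK ?num_real // lerXn2r ?nnegrE.
have nm0 : 0 <= n%:R * m by rewrite mulr_ge0 ?ler0n.
rewrite /enorm -[X in _ <= X]ger0_norm // -sqrtr_sqr ler_sqrt ?sqr_ge0 //.
rewrite (le_trans sum_le) // exprMn ler_wpM2r ?sqr_ge0 // expr2.
by rewrite ler_peMl ?ler0n.
Qed.

Lemma matrix_op_bound M : (0 < n)%N ->
  exists2 L, 0 < L & forall u, enorm (M *m u) <= L * enorm u.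
Proof.
move=> n0; set S := \sum_i \sum_j `|M i j|.
have S0 : 0 <= S by apply: sumr_ge0 => i _; apply: sumr_ge0.
exists (n%:R * S + 1); first by rewrite ltr_wpDl ?mulr_ge0.
move=> u; have e0 := enorm_ge0 u.
have coord_bound i : `|(M *m u) i 0| <= S * enorm u.
  rewrite mxE (le_trans (ler_norm_sum _ _ _)) //.
  apply: (@le_trans _ _ ((\sum_j `|M i j|) * enorm u)).
    rewrite mulr_suml; apply: ler_sum => j _.
    by rewrite normrM ler_wpM2l ?coord_le_enorm.
  rewrite ler_wpM2r // /S [X in _ <= X](bigD1 i) //= lerDl.
  by apply: sumr_ge0 => k _; apply: sumr_ge0.
apply: (le_trans (enorm_le_coord_bound n0 (mulr_ge0 S0 e0) coord_bound)).
by rewrite mulrA ler_wpM2r // lerDl.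
Qed.

Lemma singular_kernel M : ~~ (M \in unitmx) -> exists2 u : 'cV[R]_n, u != 0 & M *m u = 0.
Proof.
rewrite unitmxE unitfE negbK -det_tr => /det0P [v v0 vM].
exists v^T; first by apply: contra v0 => /eqP h; rewrite -(trmxK v) h trmx0.
by rewrite -[M]trmxK -trmx_mul vM trmx0.
Qed.

End EuclideanNorm.

Lemma power_law_exponent_eq (R : realType) (C a b beta gam : R) :
  0 < C -> 0 < a -> 0 < b ->
  (forall t, 0 < t -> C * (t `^ beta * a) <= t `^ gam * b) -> beta = gam.
Proof.
move=> C0 a0 b0 cmp; apply/eqP; apply/negPn/negP => neq.
have d0 : gam - beta != 0 by rewrite subr_eq0 eq_sym.
set x := C * a / (2 * b).
have x0 : 0 < x by rewrite /x divr_gt0 ?mulr_gt0.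
(* choose t with t^(gam - beta) = x, i.e. t^gam b = C a t^beta / 2 *)
set t := x `^ (gam - beta)^-1.
have t0 : 0 < t by apply: powR_gt0.
have tx : t `^ (gam - beta) = x by rewrite /t -powRrM mulVf // powRr1 // ltW.
have tgam : t `^ gam = t `^ beta * x.
  by rewrite -tx -powRD ?(gt_eqF t0) ?implybT // addrCA subrr addr0.
have xb : x * b = C * a / 2 by rewrite /x; field; rewrite ?gt_eqF.
have := cmp t t0; rewrite tgam.
have p0 : 0 < t `^ beta by apply: powR_gt0.
move: p0 xb; set p := t `^ beta => p0 xb.
have : 0 < C * a * p by rewrite !mulr_gt0.
nra.
Qed.

Section PowerMap.
Variables (R : realType) (n : nat) (A K : 'M[R]_n) (alpha : R).
Implicit Types u : 'cV[R]_n.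
Let F := FAK A K alpha.

Lemma FAK_pair0 u : dotv (F u - F 0) (u - 0) = enorm (K *m u) `^ alpha * (u^T *m A *m u) 0 0.
Proof. by rewrite /F /FAK !mulmx0 scaler0 !subr0 dotvZl qformE. Qed.

Lemma qform0 : ((0 : 'cV[R]_n)^T *m A *m (0 : 'cV[R]_n)) 0 0 = 0.
Proof. by rewrite mulmx0 mxE. Qed.

Lemma weighted_qform_homogeneous t u : 0 < t ->
  enorm (K *m (t *: u)) `^ alpha * ((t *: u)^T *m A *m (t *: u)) 0 0
  = t `^ (alpha + 2) * (enorm (K *m u) `^ alpha * (u^T *m A *m u) 0 0).
Proof.
move=> t0; have t_ge0 := ltW t0.
rewrite !qformE -!scalemxAr enormZ // powRM ?enorm_ge0 //.
rewrite dotvZl dotvZr powRD ?(gt_eqF t0) ?implybT // (powR_mulrn 2 t_ge0).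
by ring.
Qed.

Lemma weight_gt0 u : K \in unitmx -> u != 0 -> 0 < enorm (K *m u) `^ alpha.
Proof.
move=> Ku u0; apply/powR_gt0/enorm_gt0; apply: contra u0 => /eqP Ku0.
by rewrite -(mulKmx Ku u) Ku0 mulmx0.
Qed.

Lemma monotone_qform_ge0 : K \in unitmx -> monotone_map F ->
  forall u, 0 <= (u^T *m A *m u) 0 0.
Proof.
move=> Ku mono u; have [->|u0] := eqVneq u 0; first by rewrite qform0.
by have := mono u 0; rewrite FAK_pair0 pmulr_rge0 // weight_gt0.
Qed.

Section BetaMonotone.
Variables (beta C : R).
Hypothesis C_gt0 : 0 < C.
Hypothesis lower : forall u, C * enorm u `^ beta <= enorm (K *m u) `^ alpha * (u^T *m A *m u) 0 0.

Lemma lower_gt0 u : u != 0 -> 0 < enorm (K *m u) `^ alpha * (u^T *m A *m u) 0 0.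
Proof. by move=> u0; apply: lt_le_trans (lower u); rewrite mulr_gt0 ?powR_gt0 ?enorm_gt0. Qed.

Lemma beta_monotone_unitK : 0 < alpha -> K \in unitmx.
Proof.
move=> a0; apply/negPn/negP => /singular_kernel [u u0 Ku0].
by have := lower_gt0 u0; rewrite Ku0 enorm0 powR0 ?gt_eqF // mul0r ltxx.
Qed.

Lemma beta_monotone_unitA : A \in unitmx.
Proof.
apply/negPn/negP => /singular_kernel [u u0 Au0].
by have := lower_gt0 u0; rewrite -mulmxA Au0 mulmx0 mxE mulr0 ltxx.
Qed.

(* Comparing both sides along the ray through the all-ones vector. *)
Lemma beta_monotone_exponent : (0 < n)%N -> beta = alpha + 2.
Proof.
move=> n0; set u1 := const_mx 1 : 'cV[R]_n.
have u1_neq0 : u1 != 0.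
  by apply/eqP => /matrixP /(_ (Ordinal n0) 0) /eqP; rewrite !mxE oner_eq0.
have u1_pow_gt0 : 0 < enorm u1 `^ beta by rewrite powR_gt0 ?enorm_gt0.
apply: (power_law_exponent_eq C_gt0 u1_pow_gt0 (lower_gt0 u1_neq0)) => t t0.
have t_ge0 := ltW t0.
by rewrite -weighted_qform_homogeneous // -powRM ?enorm_ge0 // -enormZ.
Qed.

Lemma beta_monotone_coercive : (0 < n)%N -> 0 < alpha -> beta = alpha + 2 ->
  exists2 c, 0 < c & forall u, c * enorm u ^+ 2 <= (u^T *m A *m u) 0 0.
Proof.
move=> n0 a0 beta_eq; have [L L0 opL] := matrix_op_bound K n0.
have La0 : 0 < L `^ alpha by apply: powR_gt0.
exists (C / L `^ alpha); first by rewrite divr_gt0.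
move=> u; have [->|u0] := eqVneq u 0; first by rewrite qform0 enorm0 expr0n mulr0.
have KU := beta_monotone_unitK a0.
have e0 := enorm_gt0 u0; have [L_ge0 e_ge0] := (ltW L0, ltW e0).
have Ku_le : enorm (K *m u) `^ alpha <= L `^ alpha * enorm u `^ alpha.
  by rewrite -powRM // ge0_ler_powR ?nnegrE ?enorm_ge0 ?mulr_ge0 // ltW.
have := lower u; rewrite beta_eq powRD ?(gt_eqF e0) ?implybT //.
rewrite (powR_mulrn 2 e_ge0).
have P0 : 0 < enorm u `^ alpha by apply: powR_gt0.
have q0 : 0 < (u^T *m A *m u) 0 0.
  by have := lower_gt0 u0; rewrite pmulr_rgt0 // weight_gt0.
move: Ku_le P0 q0.
set Q := enorm (K *m u) `^ alpha; set P := enorm u `^ alpha; set La := L `^ alpha.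
set q := (u^T *m A *m u) 0 0; set s := enorm u ^+ 2 => Ku_le P0 q0 low.
have Qq : Q * q <= La * P * q by rewrite ler_wpM2r // ltW.
rewrite mulrAC ler_pdivrMr // -(ler_pM2r P0).
have -> : C * s * P = C * (P * s) by ring.
have -> : q * La * P = La * P * q by ring.
exact: le_trans low Qq.
Qed.

End BetaMonotone.
End PowerMap.

Theorem mainTheorem9 (R : realType) (n : nat) (A K : 'M[R]_n) (alpha : R) :
  (0 < n)%N -> 0 < alpha ->
  ((K \in unitmx) -> monotone_map (FAK A K alpha) ->
     forall u : 'cV[R]_n, 0 <= (u^T *m A *m u) 0 0)
  /\
  (forall beta : R, 0 < beta -> beta_monotone beta (FAK A K alpha) ->
     [/\ A \in unitmx, K \in unitmx, beta = alpha + 2 &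
        exists C : R, 0 < C /\
          forall u : 'cV[R]_n, C * enorm u ^+ 2 <= (u^T *m A *m u) 0 0]).
Proof.
move=> n0 a0; split; first exact: monotone_qform_ge0.
move=> beta _ [C [C0 mono]].
have lower u : C * enorm u `^ beta <= enorm (K *m u) `^ alpha * (u^T *m A *m u) 0 0.
  by have := mono u 0; rewrite FAK_pair0 subr0.
have beta_eq := beta_monotone_exponent C0 lower n0.
have [c c0 coercive] := beta_monotone_coercive C0 lower n0 a0 beta_eq.
split=> //; first exact: beta_monotone_unitA C0 lower.
  exact: beta_monotone_unitK C0 lower a0.
by exists c.
Qed.
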